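(* Let $Q\in N_\kappa(H)$ have the representation $Q(z)=\Gamma_0^+(A-z)^{-1}\Gamma_0$, where $A$ is a bounded self-adjoint operator in a Pontryagin space $K$, $\Gamma_0:H\to K$ is bounded, and $\Gamma_0^+\Gamma_0$ is boundedly invertible (the representation need not be minimal). Let $P:=\Gamma_0(\Gamma_0^+\Gamma_0)^{-1}\Gamma_0^+$ and let $\tilde A:=(I-P)A(I-P)$, regarded as a bounded self-adjoint operator in the Pontryagin space $(I-P)K$; for $z\in\rho(\tilde A)$ let $(I-P)(\tilde A-z)^{-1}(I-P)$ denote the operator on $K$ equal to $(\tilde A-z)^{-1}$ on $(I-P)K$ and to $0$ on $PK$. Then for every $z\in\rho(A)\cap\rho(\tilde A)$, $Q(z)$ is boundedly invertible and $\hat Q(z):=-Q(z)^{-1}$ is given by $$\hat Q(z)=(\Gamma_0^+\Gamma_0)^{-1}\Gamma_0^+\Big\{A(I-P)(\tilde A-z)^{-1}(I-P)A-(A-z)\Big\}\Gamma_0(\Gamma_0^+\Gamma_0)^{-1}.$$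
   Context: $H$ is a Hilbert space with inner product $(\cdot,\cdot)$; $(K,[\cdot,\cdot])$ is a Pontryagin space (Krein space with finitely many negative squares). For bounded $\Gamma_0:H\to K$, $\Gamma_0^+:K\to H$ is defined by $(h,\Gamma_0^+k)=[\Gamma_0h,k]$. $N_\kappa(H)$ is the class of generalized Nevanlinna functions: $Q$ meromorphic in $\mathbb{C}\setminus\mathbb{R}$ with values in bounded operators on $H$, $Q(\bar z)^*=Q(z)$, and the kernel $\frac{Q(z)-Q(w)^*}{z-\bar w}$ has exactly $\kappa$ negative squares. $P$ is an orthogonal projection in $K$ with $PK=\Gamma_0(H)$, $(I-P)K=\ker\Gamma_0^+$, and $K=(I-P)K[+]PK$. *)

From Stdlib Require Import Reals.
Open Scope R_scope.

Set Implicit Arguments.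

Record Cplx := mkC { Re : R; Im : R }.

Definition C0 : Cplx := mkC 0 0.
Definition C1 : Cplx := mkC 1 0.
Definition Cadd (a b : Cplx) : Cplx := mkC (Re a + Re b) (Im a + Im b).
Definition Copp (a : Cplx) : Cplx := mkC (- Re a) (- Im a).
Definition Cmul (a b : Cplx) : Cplx :=
  mkC (Re a * Re b - Im a * Im b) (Re a * Im b + Im a * Re b).
Definition Cconj (a : Cplx) : Cplx := mkC (Re a) (- Im a).
Definition Cinv (a : Cplx) : Cplx :=
  let d := Re a * Re a + Im a * Im a in mkC (Re a / d) (- Im a / d).
Definition Cdiv (a b : Cplx) : Cplx := Cmul a (Cinv b).

Fixpoint Csum (n : nat) (f : nat -> Cplx) : Cplx :=
  match n with
  | O => C0
  | S k => Cadd (Csum k f) (f k)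
  end.

Record CVS := {
  V :> Type;
  vadd : V -> V -> V;
  vzero : V;
  vopp : V -> V;
  vscal : Cplx -> V -> V;
  vadd_assoc : forall x y z, vadd x (vadd y z) = vadd (vadd x y) z;
  vadd_comm : forall x y, vadd x y = vadd y x;
  vadd_0 : forall x, vadd x vzero = x;
  vadd_opp : forall x, vadd x (vopp x) = vzero;
  vscal_1 : forall x, vscal C1 x = x;
  vscal_assoc : forall a b x, vscal a (vscal b x) = vscal (Cmul a b) x;
  vscal_distr_v : forall a x y, vscal a (vadd x y) = vadd (vscal a x) (vscal a y);
  vscal_distr_c : forall a b x, vscal (Cadd a b) x = vadd (vscal a x) (vscal b x)
}.
Arguments vadd {c}. Arguments vzero {c}. Arguments vopp {c}. Arguments vscal {c}.

Definition vsub {X : CVS} (x y : X) : X := vadd x (vopp y).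

Fixpoint vsum {X : CVS} (n : nat) (x : nat -> X) : X :=
  match n with
  | O => vzero
  | S k => vadd (vsum k x) (x k)
  end.

Definition linear {X Y : CVS} (T : X -> Y) : Prop :=
  (forall x y, T (vadd x y) = vadd (T x) (T y)) /\
  (forall a x, T (vscal a x) = vscal a (T x)).

Definition bounded {X Y : CVS} (nX : X -> R) (nY : Y -> R) (T : X -> Y) : Prop :=
  linear T /\ exists M : R, forall x, nY (T x) <= M * nX x.

Definition complete_wrt {X : CVS} (n : X -> R) : Prop :=
  forall u : nat -> X,
    (forall eps, 0 < eps -> exists N, forall p q, (N <= p)%nat -> (N <= q)%nat ->
        n (vsub (u p) (u q)) < eps) ->
    exists l : X, forall eps, 0 < eps -> exists N, forall p, (N <= p)%nat ->
        n (vsub (u p) l) < eps.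

Record Hilbert := {
  hsp :> CVS;
  ip : hsp -> hsp -> Cplx;
  ip_add_l : forall x y z, ip (vadd x y) z = Cadd (ip x z) (ip y z);
  ip_scal_l : forall a x y, ip (vscal a x) y = Cmul a (ip x y);
  ip_herm : forall x y, ip y x = Cconj (ip x y);
  ip_pos : forall x, 0 <= Re (ip x x);
  ip_def : forall x, ip x x = C0 -> x = vzero;
  hnorm_def := fun x => sqrt (Re (ip x x));
  h_complete : complete_wrt hnorm_def
}.
Arguments ip {h}.

Definition hnorm {H : Hilbert} (x : H) : R := sqrt (Re (ip x x)).

(* ---------- Pontryagin spaces ----------
   A Krein space (K,[.,.]) given with a fundamental symmetry J: J is linear,
   J^2 = I, J is [.,.]-selfadjoint, (x,y)_J := [Jx,y] is a complete
   (Hilbert) inner product; K_- = {x | Jx = -x} is finite dimensional. *)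
Record Pontryagin := {
  ksp :> CVS;
  kip : ksp -> ksp -> Cplx;
  kip_add_l : forall x y z, kip (vadd x y) z = Cadd (kip x z) (kip y z);
  kip_scal_l : forall a x y, kip (vscal a x) y = Cmul a (kip x y);
  kip_herm : forall x y, kip y x = Cconj (kip x y);
  fJ : ksp -> ksp;
  fJ_linear : linear fJ;
  fJ_invol : forall x, fJ (fJ x) = x;
  fJ_sa : forall x y, kip (fJ x) y = kip x (fJ y);
  fJ_pos : forall x, 0 <= Re (kip (fJ x) x);
  fJ_def : forall x, kip (fJ x) x = C0 -> x = vzero;
  knorm_def := fun x => sqrt (Re (kip (fJ x) x));
  k_complete : complete_wrt knorm_def;
  k_neg_findim : exists (n : nat) (b : nat -> ksp),
      forall x, fJ x = vopp x -> exists c : nat -> Cplx, x = vsum n (fun i => vscal (c i) (b i))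
}.
Arguments kip {p}. Arguments fJ {p}.

Definition knorm {K : Pontryagin} (x : K) : R := sqrt (Re (kip (fJ x) x)).

Definition is_resolvent (K : Pontryagin) (A : K -> K) (z : Cplx) (RA : K -> K) : Prop :=
  bounded knorm knorm RA /\
  forall x, RA (vsub (A x) (vscal z x)) = x /\ vsub (A (RA x)) (vscal z (RA x)) = x.

Definition projP {H : Hilbert} {K : Pontryagin} (G0 : H -> K) (Ginv : H -> H)
  (G0p : K -> H) (x : K) : K := G0 (Ginv (G0p x)).

Definition Atilde {K : Pontryagin} (P : K -> K) (A : K -> K) (x : K) : K :=
  vsub (A (vsub x (P x))) (P (A (vsub x (P x)))).

(* z in rho(Atilde) (Atilde regarded in (I-P)K) and R is the operator on K
   equal to (Atilde - z)^{-1} on (I-P)K and to 0 on PK. *)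
Definition is_compressed_resolvent (K : Pontryagin) (P A : K -> K) (z : Cplx)
  (Rt : K -> K) : Prop :=
  bounded knorm knorm Rt /\
  (forall x, Rt (P x) = vzero) /\
  (forall x, P (Rt x) = vzero) /\
  forall x, P x = vzero ->
    Rt (vsub (Atilde P A x) (vscal z x)) = x /\
    vsub (Atilde P A (Rt x)) (vscal z (Rt x)) = x.

(* Hermitian form  sum_{i,j<m} c_i conj(c_j) (N(z_i,z_j) h_i, h_j),
   N(z,w) = (Q z - (Q w)^* )/(z - conj w). *)
Definition kernel_form {H : Hilbert} (Q : Cplx -> H -> H) (m : nat)
  (zs : nat -> Cplx) (hs : nat -> H) (c : nat -> Cplx) : Cplx :=
  Csum m (fun i => Csum m (fun j =>
    Cmul (Cmul (c i) (Cconj (c j)))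
      (Cdiv (Cadd (ip (Q (zs i) (hs i)) (hs j)) (Copp (ip (hs i) (Q (zs j) (hs j)))))
            (Cadd (zs i) (Copp (Cconj (zs j))))))).

Definition neg_squares_ge {H : Hilbert} (D : Cplx -> Prop) (Q : Cplx -> H -> H) (n : nat) : Prop :=
  exists (m : nat) (zs : nat -> Cplx) (hs : nat -> H) (v : nat -> nat -> Cplx),
    (forall i, (i < m)%nat -> D (zs i)) /\
    (forall i j, (i < m)%nat -> (j < m)%nat -> zs i <> Cconj (zs j)) /\
    forall a : nat -> Cplx, (exists k, (k < n)%nat /\ a k <> C0) ->
      Re (kernel_form Q m zs hs (fun i => Csum n (fun k => Cmul (a k) (v k i)))) < 0.

(* Q in N_kappa(H), considered on its domain D (nonreal points of holomorphy) *)
Definition nevanlinna_class {H : Hilbert} (D : Cplx -> Prop) (kappa : nat) (Q : Cplx -> H -> H) : Prop :=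
  (forall z, D z -> D (Cconj z)) /\
  (forall z, D z -> bounded hnorm hnorm (Q z)) /\
  (forall z, D z -> forall h g, ip (Q z h) g = ip h (Q (Cconj z) g)) /\
  neg_squares_ge D Q kappa /\ ~ neg_squares_ge D Q (S kappa).

Definition nonreal (z : Cplx) : Prop := Im z <> 0.

(* With [P] the orthogonal projection onto the range of [G0] and [M := A - z],
   the inverse of the compression [G0^+ (A - z)^-1 G0] is a Schur complement:
   [(A - z)^-1] is inverted blockwise along [K = PK [+] (I-P)K], the block on
   [(I-P)K] being inverted by the compressed resolvent [Rt].  Everything reduces
   to two operator identities, [Rt M (I-P) = I-P] and [(I-P) M Rt = I-P], from
   which both one-sided inverse laws follow by linear algebra alone. *)
From Stdlib Require Import Reals Lra Psatz.
Open Scope R_scope.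

Ltac cplx_ring := repeat match goal with c : Cplx |- _ => destruct c end;
  unfold Cadd, Cmul, Cconj, Copp, C0, C1 in *; simpl in *; f_equal; ring.

Section VectorSpace.
Context {X : CVS}.
Implicit Types x y : X.

Lemma vadd_0_l x : vadd vzero x = x.
Proof. rewrite vadd_comm; apply vadd_0. Qed.

Lemma vadd_opp_l x : vadd (vopp x) x = vzero.
Proof. rewrite vadd_comm; apply vadd_opp. Qed.

Lemma vadd_cancel_l a x y : vadd a x = vadd a y -> x = y.
Proof.
  intro E. rewrite <- (vadd_0_l x), <- (vadd_0_l y), <- (vadd_opp_l a), <- !vadd_assoc, E.
  reflexivity.
Qed.

Lemma vopp_unique x y : vadd x y = vzero -> y = vopp x.
Proof. intro E. apply (vadd_cancel_l x). rewrite E, vadd_opp; reflexivity. Qed.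

Lemma vopp_involutive x : vopp (vopp x) = x.
Proof. symmetry. apply vopp_unique, vadd_opp_l. Qed.

Lemma vopp_vadd x y : vopp (vadd x y) = vadd (vopp x) (vopp y).
Proof.
  symmetry; apply vopp_unique.
  rewrite <- vadd_assoc, (vadd_assoc _ y), (vadd_comm _ y (vopp x)), <- (vadd_assoc _ (vopp x)),
    vadd_opp, vadd_0, vadd_opp.
  reflexivity.
Qed.

Lemma vscal_0_l x : vscal C0 x = vzero.
Proof.
  apply (vadd_cancel_l (vscal C0 x)). rewrite vadd_0, <- vscal_distr_c.
  f_equal. cplx_ring.
Qed.

Lemma vscal_0_r a : vscal a (@vzero X) = vzero.
Proof.
  apply (vadd_cancel_l (vscal a vzero)). rewrite vadd_0, <- vscal_distr_v, vadd_0.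
  reflexivity.
Qed.

Lemma vopp_vscal x : vopp x = vscal (mkC (-1) 0) x.
Proof.
  symmetry; apply vopp_unique. rewrite <- (vscal_1 _ x) at 1.
  rewrite <- vscal_distr_c. replace (Cadd C1 (mkC (-1) 0)) with C0 by cplx_ring.
  apply vscal_0_l.
Qed.

Lemma vscal_vopp a x : vscal a (vopp x) = vopp (vscal a x).
Proof. rewrite !vopp_vscal, !vscal_assoc. f_equal. cplx_ring. Qed.

Lemma vsub_eq0 x y : vsub x y = vzero -> x = y.
Proof.
  unfold vsub; intro E. rewrite <- (vopp_involutive y).
  apply vopp_unique; rewrite vadd_comm; exact E.
Qed.

Lemma vsub_0_r x : vsub x vzero = x.
Proof.
  unfold vsub. replace (@vopp X vzero) with (@vzero X) by (apply vopp_unique, vadd_0).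
  apply vadd_0.
Qed.

Lemma vsub_0_l x : vsub vzero x = vopp x.
Proof. apply vadd_0_l. Qed.

Lemma vsub_diag x : vsub x x = vzero.
Proof. apply vadd_opp. Qed.

Lemma vadd_vsub x y : vadd y (vsub x y) = x.
Proof. unfold vsub. rewrite vadd_comm, <- vadd_assoc, vadd_opp_l, vadd_0. reflexivity. Qed.

Lemma vopp_vsub x y : vopp (vsub x y) = vsub y x.
Proof. unfold vsub. rewrite vopp_vadd, vopp_involutive, vadd_comm. reflexivity. Qed.

Lemma vsub_vsub_cancel x y : vsub x (vsub x y) = y.
Proof. unfold vsub at 1. rewrite vopp_vsub. apply vadd_vsub. Qed.

Lemma vsub_vsub_r (a b m : X) : vsub (vsub a b) (vsub m b) = vsub a m.
Proof.
  unfold vsub. rewrite vopp_vadd, vopp_involutive, <- vadd_assoc, (vadd_comm _ (vopp m) b),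
    (vadd_assoc _ (vopp b)), vadd_opp_l, vadd_0_l.
  reflexivity.
Qed.
End VectorSpace.

Section Linear.
Context {X Y Z : CVS}.

Lemma linear_0 (T : X -> Y) : linear T -> T vzero = vzero.
Proof. intros [_ HT]. rewrite <- (vscal_0_l vzero), HT, vscal_0_l. reflexivity. Qed.

Lemma linear_opp (T : X -> Y) x : linear T -> T (vopp x) = vopp (T x).
Proof. intros [_ HT]. rewrite !vopp_vscal, HT; reflexivity. Qed.

Lemma linear_sub (T : X -> Y) x y : linear T -> T (vsub x y) = vsub (T x) (T y).
Proof. intros LT. unfold vsub. rewrite (proj1 LT), linear_opp by exact LT. reflexivity. Qed.

Lemma linear_comp (S : Y -> Z) (T : X -> Y) :
  linear S -> linear T -> linear (fun x => S (T x)).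
Proof. intros [S1 S2] [T1 T2]; split; intros; rewrite ?T1, ?T2, ?S1, ?S2; reflexivity. Qed.

Lemma linear_vsub_fun (S T : X -> Y) :
  linear S -> linear T -> linear (fun x => vsub (S x) (T x)).
Proof.
  intros [S1 S2] [T1 T2]; split; intros; unfold vsub.
  - rewrite S1, T1, vopp_vadd, !vadd_assoc. f_equal.
    rewrite <- !vadd_assoc. f_equal. apply vadd_comm.
  - rewrite S2, T2, vscal_distr_v, vscal_vopp. reflexivity.
Qed.

Lemma linear_vscal (a : Cplx) : linear (fun x : X => vscal a x).
Proof. split; intros. apply vscal_distr_v. rewrite !vscal_assoc. f_equal. cplx_ring. Qed.
End Linear.

Definition cabs (a : Cplx) : R := sqrt (Re a * Re a + Im a * Im a).

Lemma bounded_nonneg_const {X Y : CVS} (nX : X -> R) (nY : Y -> R) (T : X -> Y) :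
  (forall x, 0 <= nX x) ->
  bounded nX nY T -> exists M, 0 <= M /\ forall x, nY (T x) <= M * nX x.
Proof.
  intros nX_ge0 [_ [M HM]]. exists (Rmax M 0). split; [apply Rmax_r|].
  intro x. eapply Rle_trans; [apply HM|]. apply Rmult_le_compat_r; [apply nX_ge0|apply Rmax_l].
Qed.

Lemma bounded_comp {X Y Z : CVS} (nX : X -> R) (nY : Y -> R) (nZ : Z -> R)
  (S : Y -> Z) (T : X -> Y) :
  (forall x, 0 <= nX x) -> (forall y, 0 <= nY y) ->
  bounded nY nZ S -> bounded nX nY T -> bounded nX nZ (fun x => S (T x)).
Proof.
  intros nX_ge0 nY_ge0 BS BT. split; [exact (linear_comp _ _ (proj1 BS) (proj1 BT))|].
  destruct (bounded_nonneg_const _ _ _ nY_ge0 BS) as [MS [MS0 HS]].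
  destruct (bounded_nonneg_const _ _ _ nX_ge0 BT) as [MT [MT0 HT]].
  exists (MS * MT). intro x. rewrite Rmult_assoc.
  eapply Rle_trans; [apply HS|]. apply Rmult_le_compat_l; auto.
Qed.

Section BoundedCombinators.
Context {X Y : CVS} (nX : X -> R) (nY : Y -> R).
Hypothesis nY_sub : forall a b, nY (vsub a b) <= nY a + nY b.

Lemma bounded_vsub_fun (S T : X -> Y) :
  bounded nX nY S -> bounded nX nY T -> bounded nX nY (fun x => vsub (S x) (T x)).
Proof.
  intros [LS [MS HS]] [LT [MT HT]]. split; [exact (linear_vsub_fun _ _ LS LT)|].
  exists (MS + MT). intro x. eapply Rle_trans; [apply nY_sub|].
  pose proof (HS x); pose proof (HT x). lra.
Qed.
End BoundedCombinators.

Lemma bounded_vscal {X : CVS} (n : X -> R) (a : Cplx) :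
  (forall x, n (vscal a x) = cabs a * n x) -> bounded n n (fun x => vscal a x).
Proof. intro Hn. split; [apply linear_vscal|]. exists (cabs a). intro x. rewrite Hn; lra. Qed.

Lemma bounded_vopp {X Y : CVS} (nX : X -> R) (nY : Y -> R) (T : X -> Y) :
  (forall y, nY (vopp y) = nY y) -> bounded nX nY T -> bounded nX nY (fun x => vopp (T x)).
Proof.
  intros Hn [[T1 T2] [M HM]]. split.
  - split; intros; [rewrite T1; apply vopp_vadd | rewrite T2; symmetry; apply vscal_vopp].
  - exists M. intro x. rewrite Hn. apply HM.
Qed.

Section HermitianForm.
Context {X : CVS} (F : X -> X -> Cplx).
Hypothesis F_add_l : forall x y z, F (vadd x y) z = Cadd (F x z) (F y z).
Hypothesis F_scal_l : forall a x y, F (vscal a x) y = Cmul a (F x y).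
Hypothesis F_herm : forall x y, F y x = Cconj (F x y).
Hypothesis F_pos : forall x, 0 <= Re (F x x).

Definition form_norm (x : X) : R := sqrt (Re (F x x)).

Lemma form_add_r x y z : F x (vadd y z) = Cadd (F x y) (F x z).
Proof. rewrite (F_herm (vadd y z) x), (F_herm y x), (F_herm z x), F_add_l. cplx_ring. Qed.

Lemma form_scal_r a x y : F x (vscal a y) = Cmul (Cconj a) (F x y).
Proof. rewrite (F_herm (vscal a y) x), (F_herm y x), F_scal_l. cplx_ring. Qed.

Lemma form_Im_diag x : Im (F x x) = 0.
Proof. pose proof (f_equal Im (F_herm x x)). simpl in H. lra. Qed.

Lemma form_Re_quadratic x y t :
  Re (F (vadd x (vscal (mkC t 0) y)) (vadd x (vscal (mkC t 0) y)))
  = Re (F x x) + 2 * t * Re (F x y) + t * t * Re (F y y).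
Proof.
  rewrite F_add_l, !form_add_r, !F_scal_l, !form_scal_r, (F_herm y x).
  pose proof (form_Im_diag y).
  destruct (F x y), (F y y), (F x x); simpl in *. subst. ring.
Qed.

Lemma form_cauchy_schwarz_sq x y : Re (F x y) * Re (F x y) <= Re (F x x) * Re (F y y).
Proof.
  pose proof (F_pos x); pose proof (F_pos y).
  set (a := Re (F y y)) in *; set (b := Re (F x y)) in *; set (c := Re (F x x)) in *.
  assert (Hq : forall t, 0 <= c + 2 * t * b + t * t * a).
  { intro t. unfold a, b, c. rewrite <- form_Re_quadratic. apply F_pos. }
  destruct (Req_dec a 0) as [Ha|Ha].
  - destruct (Req_dec b 0) as [Hb|Hb]; [rewrite Hb; nra|].
    specialize (Hq (- (c + 1) / (2 * b))). rewrite Ha in Hq.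
    replace (c + 2 * (- (c + 1) / (2 * b)) * b + - (c + 1) / (2 * b) * (- (c + 1) / (2 * b)) * 0)
      with (-1) in Hq by (field; auto). lra.
  - specialize (Hq (- b / a)).
    replace (c + 2 * (- b / a) * b + - b / a * (- b / a) * a) with ((c * a - b * b) / a) in Hq
      by (field; auto).
    assert (0 < a) by lra.
    assert (0 <= c * a - b * b).
    { apply Rmult_le_reg_r with (/ a); [apply Rinv_0_lt_compat; lra|].
      rewrite Rmult_0_l. exact Hq. }
    nra.
Qed.

Lemma form_norm_ge0 x : 0 <= form_norm x.
Proof. apply sqrt_pos. Qed.

Lemma form_norm_sq x : form_norm x * form_norm x = Re (F x x).
Proof. apply sqrt_sqrt, F_pos. Qed.

Lemma form_cauchy_schwarz x y : Re (F x y) <= form_norm x * form_norm y.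
Proof.
  pose proof (form_cauchy_schwarz_sq x y). pose proof (form_norm_sq x); pose proof (form_norm_sq y).
  pose proof (form_norm_ge0 x); pose proof (form_norm_ge0 y).
  assert (Hsq : Re (F x y) * Re (F x y)
                <= (form_norm x * form_norm y) * (form_norm x * form_norm y)) by nra.
  destruct (Rle_dec (Re (F x y)) (form_norm x * form_norm y)) as [|Hlt]; auto.
  assert (0 <= form_norm x * form_norm y) by nra.
  exfalso. assert (form_norm x * form_norm y < Re (F x y)) by lra. nra.
Qed.

Lemma form_norm_le x c : 0 <= c -> Re (F x x) <= c * c -> form_norm x <= c.
Proof. intros Hc Hx. unfold form_norm. rewrite <- (sqrt_square c Hc). apply sqrt_le_1_alt, Hx. Qed.

Lemma form_norm_vadd x y : form_norm (vadd x y) <= form_norm x + form_norm y.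
Proof.
  pose proof (form_norm_ge0 x); pose proof (form_norm_ge0 y).
  apply form_norm_le; [lra|].
  pose proof (form_Re_quadratic x y 1) as E. change (mkC 1 0) with C1 in E.
  rewrite vscal_1 in E. rewrite E.
  pose proof (form_cauchy_schwarz x y); pose proof (form_norm_sq x); pose proof (form_norm_sq y).
  nra.
Qed.

Lemma form_norm_vscal a x : form_norm (vscal a x) = cabs a * form_norm x.
Proof.
  unfold form_norm, cabs. rewrite <- sqrt_mult; [|nra|apply F_pos]. f_equal.
  rewrite F_scal_l, form_scal_r. pose proof (form_Im_diag x).
  destruct (F x x), a; simpl in *. subst. ring.
Qed.

Lemma form_norm_vopp x : form_norm (vopp x) = form_norm x.
Proof.
  rewrite vopp_vscal, form_norm_vscal. unfold cabs; simpl.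
  replace (-1 * -1 + 0 * 0) with 1 by ring. rewrite sqrt_1; ring.
Qed.

Lemma form_norm_vsub x y : form_norm (vsub x y) <= form_norm x + form_norm y.
Proof. unfold vsub. rewrite <- (form_norm_vopp y). apply form_norm_vadd. Qed.
End HermitianForm.

Section HilbertPontryagin.
Context (H : Hilbert) (K : Pontryagin).

(* [knorm] is the norm of this Hilbert inner product. *)
Definition Jip (x y : K) : Cplx := kip (fJ x) y.

Lemma Jip_add_l x y z : Jip (vadd x y) z = Cadd (Jip x z) (Jip y z).
Proof. unfold Jip. rewrite (proj1 (fJ_linear K)). apply kip_add_l. Qed.

Lemma Jip_scal_l a x y : Jip (vscal a x) y = Cmul a (Jip x y).
Proof. unfold Jip. rewrite (proj2 (fJ_linear K)). apply kip_scal_l. Qed.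

Lemma Jip_herm x y : Jip y x = Cconj (Jip x y).
Proof. unfold Jip. rewrite fJ_sa, kip_herm. reflexivity. Qed.

Lemma knorm_vsub (x y : K) : knorm (vsub x y) <= knorm x + knorm y.
Proof. exact (form_norm_vsub Jip Jip_add_l Jip_scal_l Jip_herm (fJ_pos K) x y). Qed.

Lemma knorm_vscal a (x : K) : knorm (vscal a x) = cabs a * knorm x.
Proof. exact (form_norm_vscal Jip Jip_scal_l Jip_herm (fJ_pos K) a x). Qed.

Lemma hnorm_ge0 (x : H) : 0 <= hnorm x.
Proof. apply sqrt_pos. Qed.

Lemma knorm_ge0 (x : K) : 0 <= knorm x.
Proof. apply sqrt_pos. Qed.

Lemma hnorm_vopp (x : H) : hnorm (vopp x) = hnorm x.
Proof. exact (form_norm_vopp ip (ip_scal_l H) (ip_herm H) (ip_pos H) x). Qed.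

Lemma kip_cauchy_schwarz (x y : K) : Re (kip x y) <= knorm x * knorm y.
Proof.
  replace (knorm x) with (knorm (fJ x)) by (unfold knorm; rewrite fJ_invol, kip_herm; reflexivity).
  rewrite <- (fJ_invol K x) at 1.
  exact (form_cauchy_schwarz Jip Jip_add_l Jip_scal_l Jip_herm (fJ_pos K) (fJ x) y).
Qed.

Section Adjoint.
Variables (G0 : H -> K) (G0p : K -> H).
Hypothesis adjoint : forall h k, ip h (G0p k) = kip (G0 h) k.

Lemma adjoint_linear : linear G0p.
Proof.
  assert (ip_eq0 : forall x : H, (forall h, ip h x = C0) -> x = vzero) by
    (intros x Hx; apply ip_def, Hx).
  split; intros; apply vsub_eq0, ip_eq0; intro h; unfold vsub;
    rewrite vopp_vscal;
    repeat rewrite ?(form_add_r ip (ip_add_l H) (ip_herm H)),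
      ?(form_scal_r ip (ip_scal_l H) (ip_herm H)), ?adjoint,
      ?(form_add_r kip (kip_add_l K) (kip_herm K)), ?(form_scal_r kip (kip_scal_l K) (kip_herm K));
    cplx_ring.
Qed.

Lemma adjoint_bounded : bounded hnorm knorm G0 -> bounded knorm hnorm G0p.
Proof.
  intro BG0. split; [exact adjoint_linear|].
  destruct (bounded_nonneg_const _ _ _ hnorm_ge0 BG0) as [M [M0 HM]].
  exists M. intro k.
  (* [|G0p k|^2 = [G0 (G0p k), k] <= M |G0p k| |k|_J], then divide by [|G0p k|] *)
  assert (E : hnorm (G0p k) * hnorm (G0p k) = Re (kip (G0 (G0p k)) k)).
  { rewrite <- adjoint. apply sqrt_sqrt, ip_pos. }
  pose proof (kip_cauchy_schwarz (G0 (G0p k)) k). pose proof (HM (G0p k)).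
  pose proof (hnorm_ge0 (G0p k)). pose proof (sqrt_pos (Re (kip (fJ k) k))).
  pose proof (sqrt_pos (Re (kip (fJ (G0 (G0p k))) (G0 (G0p k))))).
  change (sqrt (Re (kip (fJ k) k))) with (knorm k) in *.
  change (sqrt (Re (kip (fJ (G0 (G0p k))) (G0 (G0p k))))) with (knorm (G0 (G0p k))) in *.
  destruct (Req_dec (hnorm (G0p k)) 0) as [Z|Z]; [rewrite Z; nra|].
  apply Rmult_le_reg_l with (hnorm (G0p k)); [lra|]. nra.
Qed.
End Adjoint.
End HilbertPontryagin.

Definition compl {X : CVS} (P : X -> X) (x : X) : X := vsub x (P x).

Definition shift {X : CVS} (A : X -> X) (z : Cplx) (x : X) : X := vsub (A x) (vscal z x).

(* The paper's [A (I-P) (Ã - z)^-1 (I-P) A - (A - z)], with [Rt] for [(I-P) (Ã - z)^-1 (I-P)]. *)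
Definition schur_op {X : CVS} (A Rt : X -> X) (z : Cplx) (x : X) : X :=
  vsub (A (Rt (A x))) (shift A z x).

Lemma bounded_shift (K : Pontryagin) (A : K -> K) (z : Cplx) :
  bounded knorm knorm A -> bounded knorm knorm (shift A z).
Proof.
  intro BA. apply (bounded_vsub_fun knorm knorm (knorm_vsub K) A (fun x => vscal z x) BA).
  apply bounded_vscal, knorm_vscal.
Qed.

Lemma bounded_schur_op (K : Pontryagin) (A Rt : K -> K) :
  bounded knorm knorm A -> bounded knorm knorm Rt ->
  forall z, bounded knorm knorm (schur_op A Rt z).
Proof.
  intros BA BRt z. apply (bounded_vsub_fun knorm knorm (knorm_vsub K) _ (shift A z));
    [|exact (bounded_shift K A z BA)].
  apply (bounded_comp _ knorm _ A _ (knorm_ge0 K) (knorm_ge0 K) BA).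
  exact (bounded_comp _ knorm _ Rt A (knorm_ge0 K) (knorm_ge0 K) BRt BA).
Qed.

Section SchurComplement.
Variables (H : Hilbert) (K : Pontryagin) (G0 : H -> K) (G0p : K -> H) (Ginv : H -> H).
Variables (A Rt : K -> K) (z : Cplx).
Hypotheses (G0_lin : linear G0) (G0p_lin : linear G0p) (Ginv_lin : linear Ginv).
Hypotheses (A_lin : linear A) (Rt_lin : linear Rt).
Hypothesis Ginv_G0pG0 : forall h, Ginv (G0p (G0 h)) = h.
Hypothesis G0pG0_Ginv : forall h, G0p (G0 (Ginv h)) = h.

Local Notation P := (projP G0 Ginv G0p).

Hypothesis Rt_P : forall x, Rt (P x) = vzero.
Hypothesis P_Rt : forall x, P (Rt x) = vzero.
Hypothesis Rt_inverse : forall x, P x = vzero ->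
  Rt (vsub (Atilde P A x) (vscal z x)) = x /\ vsub (Atilde P A (Rt x)) (vscal z (Rt x)) = x.

Lemma P_linear : linear P.
Proof. exact (linear_comp _ _ G0_lin (linear_comp _ _ Ginv_lin G0p_lin)). Qed.

Lemma compl_linear : linear (compl P).
Proof. exact (linear_vsub_fun _ _ (conj (fun _ _ => eq_refl) (fun _ _ => eq_refl)) P_linear). Qed.

Lemma shift_linear : linear (shift A z).
Proof. exact (linear_vsub_fun _ _ A_lin (linear_vscal z)). Qed.

Lemma G0p_P x : G0p (P x) = G0p x.
Proof. unfold projP. apply G0pG0_Ginv. Qed.

Lemma P_G0 h : P (G0 h) = G0 h.
Proof. unfold projP. rewrite Ginv_G0pG0. reflexivity. Qed.

Lemma P_idem x : P (P x) = P x.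
Proof. unfold projP. rewrite G0pG0_Ginv. reflexivity. Qed.

Lemma P_compl x : P (compl P x) = vzero.
Proof. unfold compl. rewrite (linear_sub P), P_idem by exact P_linear. apply vsub_diag. Qed.

Lemma G0p_compl x : G0p (compl P x) = vzero.
Proof. rewrite <- G0p_P, P_compl. apply linear_0, G0p_lin. Qed.

Lemma compl_idem x : compl P (compl P x) = compl P x.
Proof. unfold compl at 1. rewrite P_compl. apply vsub_0_r. Qed.

Lemma P_of_compl_0 x : compl P x = vzero -> P x = x.
Proof. intro E. symmetry. apply vsub_eq0, E. Qed.

Lemma Rt_compl x : Rt (compl P x) = Rt x.
Proof. unfold compl. rewrite (linear_sub Rt), Rt_P by exact Rt_lin. apply vsub_0_r. Qed.

Lemma Rt_G0 h : Rt (G0 h) = vzero.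
Proof. rewrite <- P_G0. apply Rt_P. Qed.

Lemma compl_Rt x : compl P (Rt x) = Rt x.
Proof. unfold compl. rewrite P_Rt. apply vsub_0_r. Qed.

Lemma G0p_Rt x : G0p (Rt x) = vzero.
Proof. rewrite <- G0p_P, P_Rt. apply linear_0, G0p_lin. Qed.

Lemma Atilde_compl x : Atilde P A x = compl P (A (compl P x)).
Proof. reflexivity. Qed.

Lemma Rt_shift_compl x : Rt (shift A z (compl P x)) = compl P x.
Proof.
  destruct (Rt_inverse _ (P_compl x)) as [E _].
  rewrite Atilde_compl, compl_idem in E. rewrite <- E at 2.
  unfold shift. rewrite !(linear_sub Rt), Rt_compl by exact Rt_lin. reflexivity.
Qed.

Lemma compl_shift_Rt x : compl P (shift A z (Rt x)) = compl P x.
Proof.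
  destruct (Rt_inverse _ (P_compl x)) as [_ E].
  rewrite Atilde_compl, Rt_compl, compl_Rt in E. rewrite <- E.
  unfold shift. rewrite (linear_sub (compl P)), (proj2 compl_linear), compl_Rt
    by exact compl_linear.
  reflexivity.
Qed.

Lemma Rt_shift x : Rt (shift A z x) = vadd (Rt (A (P x))) (compl P x).
Proof.
  rewrite <- (vadd_vsub x (P x)) at 1. fold (compl P x).
  rewrite (proj1 shift_linear), (proj1 Rt_lin), Rt_shift_compl. f_equal.
  unfold shift. rewrite (linear_sub Rt), (proj2 Rt_lin), Rt_P, vscal_0_r by exact Rt_lin.
  apply vsub_0_r.
Qed.

Lemma G0p_schur_op_P x :
  G0p (schur_op A Rt z (P x)) = vsub (G0p (A (Rt (shift A z x)))) (G0p (shift A z x)).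
Proof.
  assert (Hshift : G0p (shift A z (P x)) = vsub (G0p (shift A z x)) (G0p (A (compl P x)))).
  { rewrite <- (vsub_vsub_cancel x (P x)). fold (compl P x).
    rewrite (linear_sub (shift A z)) by exact shift_linear.
    unfold shift at 2. rewrite !(linear_sub G0p), (proj2 G0p_lin), G0p_compl, vscal_0_r, vsub_0_r
      by exact G0p_lin.
    reflexivity. }
  assert (HRt : Rt (A (P x)) = vsub (Rt (shift A z x)) (compl P x)).
  { rewrite Rt_shift. unfold vsub. rewrite <- vadd_assoc, vadd_opp, vadd_0. reflexivity. }
  unfold schur_op. rewrite (linear_sub G0p), HRt, Hshift by exact G0p_lin.
  rewrite (linear_sub A), (linear_sub G0p) by assumption. apply vsub_vsub_r.
Qed.

Lemma G0p_schur_op x :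
  G0p (schur_op A Rt z x) = vopp (G0p (shift A z (vsub x (Rt (A x))))).
Proof.
  rewrite (linear_sub (shift A z)) by exact shift_linear.
  unfold shift at 2. rewrite !(linear_sub G0p), (proj2 G0p_lin), G0p_Rt, vscal_0_r, vsub_0_r
    by exact G0p_lin.
  unfold schur_op. rewrite (linear_sub G0p), vopp_vsub by exact G0p_lin. reflexivity.
Qed.

Lemma compl_shift_corrected x : P x = x -> compl P (shift A z (vsub x (Rt (A x)))) = vzero.
Proof.
  intro Px. rewrite (linear_sub (shift A z)), (linear_sub (compl P)), compl_shift_Rt
    by (exact shift_linear || exact compl_linear).
  unfold shift. rewrite (linear_sub (compl P)), (proj2 compl_linear) by exact compl_linear.
  unfold compl at 2. rewrite Px, vsub_diag, vscal_0_r, vsub_0_r. apply vsub_diag.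
Qed.

Lemma schur_op_left_inverse (RA : K -> K) h :
  (forall x, shift A z (RA x) = x) ->
  vopp (Ginv (G0p (schur_op A Rt z (P (RA (G0 h)))))) = h.
Proof.
  intro HRA. rewrite G0p_schur_op_P, HRA, Rt_G0, !linear_0, vsub_0_l
    by (exact A_lin || exact G0p_lin).
  rewrite (linear_opp Ginv), vopp_involutive by exact Ginv_lin. apply Ginv_G0pG0.
Qed.

Lemma schur_op_right_inverse (RA : K -> K) h :
  (forall x, RA (shift A z x) = x) ->
  G0p (RA (G0 (vopp (Ginv (G0p (schur_op A Rt z (G0 (Ginv h)))))))) = h.
Proof.
  intro HRA. set (k := G0 (Ginv h)).
  rewrite G0p_schur_op, (linear_opp Ginv), vopp_involutive by exact Ginv_lin.
  change (G0 (Ginv (G0p ?w))) with (P w).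
  rewrite P_of_compl_0 by (apply compl_shift_corrected, P_G0).
  rewrite HRA, (linear_sub G0p), G0p_Rt, vsub_0_r by exact G0p_lin. apply G0pG0_Ginv.
Qed.
End SchurComplement.

Theorem theorem2 (H : Hilbert) (K : Pontryagin) (kappa : nat) (Q : Cplx -> H -> H)
  (A : K -> K) (G0 : H -> K) (G0p : K -> H) (Ginv : H -> H) :
  bounded hnorm knorm G0 ->
  (forall (h : H) (k : K), ip h (G0p k) = kip (G0 h) k) ->
  bounded knorm knorm A ->
  (forall x y : K, kip (A x) y = kip x (A y)) ->
  bounded hnorm hnorm Ginv ->
  (forall h : H, Ginv (G0p (G0 h)) = h) ->
  (forall h : H, G0p (G0 (Ginv h)) = h) ->
  (forall z RA, is_resolvent K A z RA -> forall h : H, Q z h = G0p (RA (G0 h))) ->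
  nevanlinna_class (fun z => nonreal z /\ exists RA, is_resolvent K A z RA) kappa Q ->
  forall (z : Cplx) (RA Rt : K -> K),
    is_resolvent K A z RA ->
    is_compressed_resolvent K (projP G0 Ginv G0p) A z Rt ->
    exists Qi : H -> H,
      bounded hnorm hnorm Qi /\
      (forall h, Qi (Q z h) = h) /\
      (forall h, Q z (Qi h) = h) /\
      (forall h, vopp (Qi h) =
         Ginv (G0p (vsub (A (Rt (A (G0 (Ginv h)))))
                         (vsub (A (G0 (Ginv h))) (vscal z (G0 (Ginv h))))))).
Proof.
  intros BG0 Hadj BA _ BGinv hG1 hG2 HQ _ z RA Rt HRA [BRt [Rt_P [P_Rt Rt_inv]]].
  pose proof (adjoint_bounded H K G0 G0p Hadj BG0) as BG0p.
  pose proof (proj1 BG0) as LG0. pose proof (proj1 BG0p) as LG0p.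
  pose proof (proj1 BGinv) as LGinv. pose proof (proj1 BA) as LA. pose proof (proj1 BRt) as LRt.
  assert (RA_right : forall x, shift A z (RA x) = x) by (intro; apply (proj2 HRA)).
  assert (RA_left : forall x, RA (shift A z x) = x) by (intro; apply (proj2 HRA)).
  exists (fun h => vopp (Ginv (G0p (schur_op A Rt z (G0 (Ginv h)))))).
  split; [|split; [|split]].
  - apply bounded_vopp; [apply hnorm_vopp|].
    apply (bounded_comp _ hnorm _ Ginv _ (hnorm_ge0 H) (hnorm_ge0 H) BGinv).
    apply (bounded_comp _ knorm _ G0p _ (hnorm_ge0 H) (knorm_ge0 K) BG0p).
    apply (bounded_comp _ knorm _ (schur_op A Rt z) _ (hnorm_ge0 H) (knorm_ge0 K)
      (bounded_schur_op K A Rt BA BRt z)).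
    exact (bounded_comp _ hnorm _ G0 Ginv (hnorm_ge0 H) (hnorm_ge0 H) BG0 BGinv).
  - intro h. rewrite (HQ z RA HRA). apply schur_op_left_inverse; auto.
  - intro h. rewrite (HQ z RA HRA). apply schur_op_right_inverse; auto.
  - intro h. apply vopp_involutive.
Qed.
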